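(* Let $G$ be a finitely generated group, $X,Y$ uniform spaces, $\mu$ a Borel measure on $X$, and let $\Phi\in Act(G,X)$ and $\Psi\in Act(G,Y)$ be uniformly conjugate via a uniform equivalence $h:X\to Y$ (i.e. $h\circ\Phi_g=\Psi_g\circ h$ for all $g\in G$). Let $h^*(\mu)$ be the measure on $Y$ given by $h^*(\mu)(A)=\mu(h^{-1}(A))$. Then: (i) if $\Phi$ has $\mu$-shadowing, $\Psi$ has $h^*(\mu)$-shadowing; (ii) if $\Phi$ is $\mu$-expansive, $\Psi$ is $h^*(\mu)$-expansive; (iii) if $\Phi$ is $\mu$-persistent, $\Psi$ is $h^*(\mu)$-persistent; (iv) if $\Phi$ is $\mu$-topologically stable, $\Psi$ is $h^*(\mu)$-topologically stable.
   Context: $D[x]=\{y:(x,y)\in D\}$. $Act(G,X)$: maps $\Phi:G\times X\to X$ with each $\Phi_g$ a uniform equivalence, $\Phi_e=\mathrm{id}$, $\Phi_{g_1g_2}=\Phi_{g_1}\circ\Phi_{g_2}$. Generating sets are finite symmetric. For a measure $\nu$ and action $\Phi$ on a uniform space $Z$: $\Phi$ is $\nu$-expansive if there is a closed entourage $D$ with $\nu(\Gamma_D(x))=0$ for all $x$, where $\Gamma_D(x)=\{y:(\Phi_g(x),\Phi_g(y))\in D\ \forall g\}$. $\{x_g\}$ is a $D$-pseudo orbit (w.r.t. $S$) if $(x_{sg},\Phi_s(x_g))\in D$ for all $s\in S,g$; through $B$ if $x_e\in B$; $E$-shadowed by $x$ if $(x_g,\Phi_g(x))\in E$ for all $g$.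 $\nu$-shadowing: for some $S$, for every entourage $E$ there are an entourage $D$ and measurable $B$ with $\nu(Z\setminus B)=0$ such that every $D$-pseudo orbit through $B$ is $E$-shadowed by some point. $\nu$-persistent: for some $S$, for every $E$ there are $D$ and measurable $B$, $\nu(Z\setminus B)=0$, such that whenever $\Psi'\in Act(G,Z)$ satisfies $(\Psi'_s(x),\Phi_s(x))\in D$ for all $x,s\in S$, for each $x\in B$ there is $y$ with $(\Psi'_g(x),\Phi_g(y))\in E$ for all $g$. For set-valued $H:Z\to\mathcal{P}(Z)$: $Dom(H)=\{x:H(x)\ne\emptyset\}$; $(Id,H)\in E$ means $H(x)\subset E[x]$ for all $x$; upper semi-continuous: for each $x\in Dom(H)$ and open $O\supset H(x)$ there is an entourage $D$ with $H(y)\subset O$ whenever $(x,y)\in D$. $\nu$-topologically stable: for some $S$, for every $E$ there is $D$ such that for every $\Psi'\in Act(G,Z)$ with $(\Psi'_s(x),\Phi_s(x))\in D$ for all $x,s\in S$ there is an upper semi-continuous compact-valued $H$ with measurable domain, $\nu(Z\setminus Dom(H))=0$, $\nu(H(x))=0$ for all $x$, $(Id,H)\in E$, and $\Phi_g(H(x))=H(\Psi'_g(x))$ for all $g,x$. *)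

From HB Require Import structures.
From mathcomp Require Import all_boot all_order all_algebra.
From mathcomp Require Import all_classical all_reals all_analysis.
From mathcomp Require Import monoid.

Set Implicit Arguments.
Unset Strict Implicit.
Unset Printing Implicit Defensive.

Import Order.TTheory Num.Theory.
Local Open Scope classical_set_scope.
Local Open Scope ereal_scope.

Definition generating_set (G : groupType) (S : seq G) : Prop :=
  (forall s, s \in S -> (s^-1)%g \in S) /\
  (forall g : G, exists l : seq G, {subset l <= S} /\ g = foldr (fun a b => (a * b)%g) 1%g l).

Definition finitely_generated (G : groupType) : Prop :=
  exists S : seq G, generating_set S.

Definition uniform_equiv (X Y : uniformType) (f : X -> Y) : Prop :=
  exists k : Y -> X, [/\ cancel f k, cancel k f, unif_continuous f & unif_continuous k].

Definition is_action (G : groupType) (X : uniformType) (Phi : G -> X -> X) : Prop :=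
  [/\ forall g, uniform_equiv (Phi g),
      Phi 1%g = id &
      forall g1 g2, Phi (g1 * g2)%g = Phi g1 \o Phi g2].

Definition borel (X : topologicalType) (A : set X) : Prop := <<s (@open X) >> A.

Definition borel_measure (R : realType) (X : topologicalType) (mu : set X -> \bar R) : Prop :=
  [/\ mu set0 = 0,
      forall A, borel A -> 0 <= mu A &
      forall F : nat -> set X, (forall n, borel (F n)) -> trivIset setT F ->
        (fun n => \sum_(0 <= i < n) mu (F i)) @ \oo --> mu (\bigcup_n F n)].

Definition pushmeasure (R : realType) (X Y : Type) (h : X -> Y) (mu : set X -> \bar R)
  : set Y -> \bar R := fun A => mu (h @^-1` A).

Section Dyn.
Context (R : realType) (G : groupType) (Z : uniformType).

Definition Gamma (Phi : G -> Z -> Z) (D : set (Z * Z)) (x : Z) : set Z :=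
  [set y | forall g, D (Phi g x, Phi g y)].

Definition nu_expansive (nu : set Z -> \bar R) (Phi : G -> Z -> Z) : Prop :=
  exists D : set (Z * Z), [/\ entourage D, closed D & forall x, nu (Gamma Phi D x) = 0].

Definition pseudo_orbit (S : seq G) (Phi : G -> Z -> Z) (D : set (Z * Z)) (xs : G -> Z) : Prop :=
  forall s g, s \in S -> D (xs (s * g)%g, Phi s (xs g)).

Definition shadowed (Phi : G -> Z -> Z) (E : set (Z * Z)) (xs : G -> Z) (x : Z) : Prop :=
  forall g, E (xs g, Phi g x).

Definition nu_shadowing (nu : set Z -> \bar R) (Phi : G -> Z -> Z) : Prop :=
  exists S : seq G, generating_set S /\
    forall E, entourage E ->
      exists D B, [/\ entourage D, borel B, nu (~` B) = 0 &
        forall xs, pseudo_orbit S Phi D xs -> B (xs 1%g) ->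
          exists x, shadowed Phi E xs x].

Definition act_close (S : seq G) (D : set (Z * Z)) (Psi' Phi : G -> Z -> Z) : Prop :=
  forall x s, s \in S -> D (Psi' s x, Phi s x).

Definition nu_persistent (nu : set Z -> \bar R) (Phi : G -> Z -> Z) : Prop :=
  exists S : seq G, generating_set S /\
    forall E, entourage E ->
      exists D B, [/\ entourage D, borel B, nu (~` B) = 0 &
        forall Psi' : G -> Z -> Z, is_action Psi' -> act_close S D Psi' Phi ->
          forall x, B x -> exists y, forall g, E (Psi' g x, Phi g y)].

Definition Dom (H : Z -> set Z) : set Z := [set x | H x !=set0].

Definition usc (H : Z -> set Z) : Prop :=
  forall x, Dom H x -> forall O : set Z, open O -> H x `<=` O ->
    exists D, entourage D /\ forall y, D (x, y) -> H y `<=` O.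

Definition nu_top_stable (nu : set Z -> \bar R) (Phi : G -> Z -> Z) : Prop :=
  exists S : seq G, generating_set S /\
    forall E, entourage E ->
      exists D, entourage D /\
        forall Psi' : G -> Z -> Z, is_action Psi' -> act_close S D Psi' Phi ->
          exists H : Z -> set Z,
            [/\ usc H /\ (forall x, compact (H x)),
                borel (Dom H) /\ nu (~` Dom H) = 0,
                (forall x, nu (H x) = 0),
                (forall x, H x `<=` xsection E x) &
                forall g x, Phi g @` H x = H (Psi' g x)].

End Dyn.

From HB Require Import structures.
From mathcomp Require Import all_boot all_order all_algebra.
From mathcomp Require Import all_classical all_reals all_analysis.
From mathcomp Require Import monoid.

(* A uniform conjugacy [h] with inverse [k] transports all the data of the
   four definitions from [Y] to [X]: entourages of [Y] pull back through
   [k × k] to entourages of [X], Borel sets pull back through [k], and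
   [h^*(mu)(k^-1 A) = mu A].  An action [Psi'] that is [D]-close to [Psi]
   yields the action [k ∘ Psi' ∘ h], close to [Phi] for the pulled back
   entourage, and a pseudo orbit [ys] of [Psi] yields the pseudo orbit
   [k ∘ ys] of [Phi].  So one applies the hypothesis on [Phi] to the
   transported data and maps the resulting points, sets or set-valued
   maps back to [Y] by [h]. *)

Set Implicit Arguments.
Unset Strict Implicit.
Unset Printing Implicit Defensive.
Local Open Scope classical_set_scope.

Definition preimage_rel (U V : Type) (f : U -> V) (D : set (V * V)) : set (U * U) :=
  [set p | D (f p.1, f p.2)].

Lemma image_cancel (U V : Type) (f : U -> V) (g : V -> U) (A : set U) :
  cancel f g -> cancel g f -> f @` A = g @^-1` A.
Proof.
move=> fK gK; apply/seteqP; split; first by move=> _ [x Ax <-]; rewrite /preimage /= fK.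
by move=> y Agy; exists (g y); rewrite ?gK.
Qed.

Lemma borel_preimage (T U : topologicalType) (f : T -> U) (A : set U) :
  continuous f -> borel A -> borel (f @^-1` A).
Proof.
move=> f_cont; apply: (@smallest_sub _ _ _ [set A | borel (f @^-1` A)]); last first.
  by move=> O oO; apply: sub_sigma_algebra; apply: open_comp => // x _; exact: f_cont.
split=> [|B|F]; rewrite /= /borel.
- by rewrite preimage_set0; exact: sigma_algebra0.
- by move=> bB; rewrite setTD preimage_setC -setTD; exact: sigma_algebraCD.
- by move=> bF; rewrite preimage_bigcup; exact: sigma_algebra_bigcup.
Qed.

Lemma unif_continuous_entourage (U V : uniformType) (f : U -> V) (E : set (V * V)) :
  unif_continuous f -> entourage E -> entourage (preimage_rel f E).
Proof. by move=> f_uc; exact: f_uc. Qed.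

Lemma unif_continuous_comp (U V W : uniformType) (f : U -> V) (g : V -> W) :
  unif_continuous f -> unif_continuous g -> unif_continuous (g \o f).
Proof. by move=> f_uc g_uc; exact: (cvg_comp _ _ f_uc g_uc). Qed.

Lemma unif_continuous_continuous (U V : uniformType) (f : U -> V) :
  unif_continuous f -> continuous f.
Proof.
move=> f_uc x P; rewrite /= -!nbhs_entourageE => -[E entE sEP].
exists (preimage_rel f E); first exact: unif_continuous_entourage.
by move=> y /xsectionP Exy; apply: sEP; apply/xsectionP.
Qed.

Lemma closed_preimage_rel (U V : uniformType) (f : U -> V) (D : set (V * V)) :
  unif_continuous f -> closed D -> closed (preimage_rel f D).
Proof.
move=> /unif_continuous_continuous f_cont cD.
apply: (@preimage_closed _ _ (fun p : U * U => (f p.1, f p.2))) => // p _.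
by apply: cvg_pair; [apply: (cvg_comp fst) cvg_fst _ | apply: (cvg_comp snd) cvg_snd _];
  exact: f_cont.
Qed.

Lemma uniform_equiv_comp (U V W : uniformType) (f : U -> V) (g : V -> W) :
  uniform_equiv f -> uniform_equiv g -> uniform_equiv (g \o f).
Proof.
move=> [f' [fK f'K f_uc f'_uc]] [g' [gK g'K g_uc g'_uc]].
exists (f' \o g'); split; [exact: can_comp | exact: can_comp
  | exact: unif_continuous_comp | exact: unif_continuous_comp].
Qed.

Section UniformConjugacy.
Variables (R : realType) (G : groupType) (X Y : uniformType).
Variables (h : X -> Y) (k : Y -> X).
Hypotheses (hK : cancel h k) (kK : cancel k h).
Hypotheses (h_uc : unif_continuous h) (k_uc : unif_continuous k).
Variables (Phi : G -> X -> X) (Psi : G -> Y -> Y).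
Hypothesis h_conj : forall g x, h (Phi g x) = Psi g (h x).
Variable mu : set X -> \bar R.

Lemma k_conj g y : k (Psi g y) = Phi g (k y).
Proof. by rewrite -{1}[y]kK -h_conj hK. Qed.

Lemma pushmeasure_preimage (A : set X) : pushmeasure h mu (k @^-1` A) = mu A.
Proof.
by rewrite /pushmeasure -comp_preimage; congr mu; apply/funext => x /=; rewrite hK.
Qed.

Lemma pushmeasure_setC_preimage (B : set X) :
  pushmeasure h mu (~` (k @^-1` B)) = mu (~` B).
Proof. by rewrite preimage_setC pushmeasure_preimage. Qed.

Lemma borel_preimage_inv (B : set X) : borel B -> borel (k @^-1` B).
Proof. exact: borel_preimage (unif_continuous_continuous k_uc). Qed.

Lemma preimage_Gamma D y :
  h @^-1` Gamma Psi (preimage_rel k D) y = Gamma Phi D (k y).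
Proof.
apply/seteqP; split=> x /= Dx g; [have := Dx g | ];
  by rewrite /preimage_rel /= !k_conj hK.
Qed.

Lemma pseudo_orbit_conj S D (ys : G -> Y) :
  pseudo_orbit S Psi (preimage_rel k D) ys -> pseudo_orbit S Phi D (k \o ys).
Proof. by move=> po s g sS; rewrite /= -k_conj; exact: po. Qed.

Definition conj_act (Psi' : G -> Y -> Y) : G -> X -> X := fun g => k \o Psi' g \o h.

Lemma is_action_conj Psi' : is_action Psi' -> is_action (conj_act Psi').
Proof.
have h_equiv : uniform_equiv h by exists k.
have k_equiv : uniform_equiv k by exists h.
move=> [Psi'_equiv Psi'1 Psi'M]; split.
- by move=> g; apply: uniform_equiv_comp => //; exact: uniform_equiv_comp.
- by apply/funext => x; rewrite /conj_act Psi'1 /= hK.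
- by move=> g1 g2; apply/funext => x; rewrite /conj_act Psi'M /= kK.
Qed.

Lemma act_close_conj S D Psi' :
  act_close S (preimage_rel k D) Psi' Psi -> act_close S D (conj_act Psi') Phi.
Proof.
by move=> cl x s sS; have := cl (h x) s sS; rewrite /preimage_rel /= k_conj hK.
Qed.

Lemma nu_expansive_conj : nu_expansive mu Phi -> nu_expansive (pushmeasure h mu) Psi.
Proof.
move=> [D [entD cD Gamma0]]; exists (preimage_rel k D); split.
- exact: unif_continuous_entourage.
- exact: closed_preimage_rel.
- by move=> y; rewrite /pushmeasure preimage_Gamma.
Qed.

Lemma nu_shadowing_conj : nu_shadowing mu Phi -> nu_shadowing (pushmeasure h mu) Psi.
Proof.
move=> [S [genS shadow]]; exists S; split => // E entE.
have [D [B [entD bB B0 shB]]] := shadow _ (unif_continuous_entourage h_uc entE).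
exists (preimage_rel k D), (k @^-1` B); split.
- exact: unif_continuous_entourage.
- exact: borel_preimage_inv.
- by rewrite pushmeasure_setC_preimage.
- move=> ys po Bys1; have [x shx] := shB _ (pseudo_orbit_conj po) Bys1.
  by exists (h x) => g; have := shx g; rewrite /preimage_rel /= kK h_conj.
Qed.

Lemma nu_persistent_conj : nu_persistent mu Phi -> nu_persistent (pushmeasure h mu) Psi.
Proof.
move=> [S [genS persist]]; exists S; split => // E entE.
have [D [B [entD bB B0 persB]]] := persist _ (unif_continuous_entourage h_uc entE).
exists (preimage_rel k D), (k @^-1` B); split.
- exact: unif_continuous_entourage.
- exact: borel_preimage_inv.
- by rewrite pushmeasure_setC_preimage.
- move=> Psi' actPsi' cl y By.
  have [x shx] := persB _ (is_action_conj actPsi') (act_close_conj cl) _ By.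
  by exists (h x) => g; have := shx g; rewrite /preimage_rel /= !kK h_conj.
Qed.

Definition conj_setmap (H : X -> set X) : Y -> set Y := fun y => h @` H (k y).

Lemma Dom_conj_setmap H : Dom (conj_setmap H) = k @^-1` Dom H.
Proof.
apply/seteqP; split=> y; first by move=> [_ [x Hx _]]; exists x.
by move=> [x Hx]; exists (h x), x.
Qed.

Lemma usc_conj_setmap H : usc H -> usc (conj_setmap H).
Proof.
move=> uscH y domy O oO sHO; rewrite Dom_conj_setmap in domy.
have oO' : open (h @^-1` O).
  by apply: open_comp => // x _; exact: unif_continuous_continuous.
have [D [entD sDO]] := uscH _ domy _ oO' (fun x Hx => sHO _ (ex_intro2 _ _ x Hx erefl)).
exists (preimage_rel k D); split; first exact: unif_continuous_entourage.
by move=> y' Dyy' _ [x Hx <-]; exact: sDO _ Dyy' _ Hx.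
Qed.

Lemma conj_setmap_equivariant Psi' H :
    (forall g x, Phi g @` H x = H (conj_act Psi' g x)) ->
  forall g y, Psi g @` conj_setmap H y = conj_setmap H (Psi' g y).
Proof.
move=> Heqv g y; rewrite /conj_setmap.
have := Heqv g (k y); rewrite /conj_act /= kK => <-.
by rewrite !image_comp; congr image; apply/funext => x /=; rewrite h_conj.
Qed.

Lemma nu_top_stable_conj :
  nu_top_stable mu Phi -> nu_top_stable (pushmeasure h mu) Psi.
Proof.
move=> [S [genS stable]]; exists S; split => // E entE.
have [D [entD stableD]] := stable _ (unif_continuous_entourage h_uc entE).
exists (preimage_rel k D); split; first exact: unif_continuous_entourage.
move=> Psi' actPsi' cl.
have [H [[uscH cptH] [bdom dom0] H0 HE Heqv]] :=
  stableD _ (is_action_conj actPsi') (act_close_conj cl).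
exists (conj_setmap H); split.
- split; first exact: usc_conj_setmap.
  move=> y; apply: continuous_compact (cptH _).
  exact/continuous_subspaceT/unif_continuous_continuous.
- rewrite Dom_conj_setmap pushmeasure_setC_preimage.
  by split=> //; exact: borel_preimage_inv.
- by move=> y; rewrite /conj_setmap (image_cancel _ hK kK) pushmeasure_preimage.
- move=> y _ [x Hx <-]; apply/xsectionP; have /xsectionP := HE _ _ Hx.
  by rewrite /preimage_rel /= kK.
- exact: conj_setmap_equivariant.
Qed.

End UniformConjugacy.

Theorem proposition4p2 (R : realType) (G : groupType) (X Y : uniformType)
    (mu : set X -> \bar R) (Phi : G -> X -> X) (Psi : G -> Y -> Y) (h : X -> Y) :
  finitely_generated G ->
  borel_measure mu ->
  is_action Phi -> is_action Psi ->
  uniform_equiv h ->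
  (forall g, h \o Phi g = Psi g \o h) ->
  [/\ nu_shadowing mu Phi -> nu_shadowing (pushmeasure h mu) Psi,
      nu_expansive mu Phi -> nu_expansive (pushmeasure h mu) Psi,
      nu_persistent mu Phi -> nu_persistent (pushmeasure h mu) Psi &
      nu_top_stable mu Phi -> nu_top_stable (pushmeasure h mu) Psi].
Proof.
move=> _ _ _ _ [k [hK kK h_uc k_uc]] hconj.
have h_conj g x : h (Phi g x) = Psi g (h x) by rewrite -[LHS]/((h \o Phi g) x) hconj.
split.
- exact: nu_shadowing_conj.
- exact: nu_expansive_conj.
- exact: nu_persistent_conj.
- exact: nu_top_stable_conj.
Qed.
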